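(* Suppose the common wavelength of the light sources is $\lambda=r\pi$ for some algebraic number $r>0$. Then there exists a two-way optical interference automaton (2OIA) that decides the language $L_{pal}=\{ww^R\mid w\in\{a,b\}^*\}$ (where $w^R$ is $w$ reversed) in time linear in the input length.
   Context: A two-way optical interference automaton (2OIA) is a deterministic machine with finite state set $Q$, start state $q_0$, accepting and rejecting states, finite input alphabet $\Sigma$, and tape alphabet $\Gamma=\Sigma\cup\{\text{¢},\$\}$. On input $w=w_1\cdots w_n$ the read-only tape holds ¢$w_1\cdots w_n\$$ in cells $0,1,\dots,n+1$, scanned by a two-way head. For each cell $m$ there is a monochromatic point light source at the point $(m,0)$ of the plane; all sources have the same wavelength $\lambda$ and the same initial amplitude $A_0$, and each source is at any moment either switched off or switched on with initial phase $0$ or $\pi$. A detector is located at a grid point $(j,k)$ with $j,k\in\{0,\tfrac12,1,\tfrac32,\dots,n+1\}$, pointing towards the source array; its field of vision is the cone making angle $\pi/4$ with the vertical line through it, so it sees exactly the sources at $(m,0)$ with $|m-j|\le k$. The resultant wave at the detector is $\sum A_0 r_m^{-1}e^{i(\phi_m+2\pi r_m/\lambda)}$, summed over the switched-on sources it sees, where $r_m$ is the distance from the source to the detector and $\phi_m\in\{0,\pi\}$ the source's phase; the detector outputs $\underline{1}$ if this resultant is nonzero and $\underline{0}$ otherwise. The transition function $\delta:Q\times\Gamma\times\{\underline0,\underline1\}\to Q\times\{\text{left},\text{right},\text{stay}\}\times\{\text{left},\text{right},\text{up},\text{down},\text{stay}\}\times\{\mathrm{toggle}(0),\mathrm{toggle}(\pi),-\}$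 maps (state, scanned symbol, detector output) to a new state, a move of the head by one cell, a move of the detector by one grid step (of length $1/2$), and an action on the source of the currently scanned cell: $\mathrm{toggle}(\phi)$ switches it on with phase $\phi$ if it is off and switches it off if it is on; $-$ does nothing. Initially all sources are off, the machine is in $q_0$, the head is on cell $0$, and the detector is at a prescribed initial grid position. For a given source, a maximal sequence of toggles at consecutive time steps is called non-transient if its length is odd; there is a constant $k$ such that the machine crashes if it attempts a non-transient toggle sequence on a single source for the $(k+1)$-th time. The machine accepts when it is in an accepting state with detector output $\underline0$. Its running time is the total number of moves made by the head plus the number of moves made by the detector. A 2OIA decides (recognizes) a language $L$ if it accepts every input in $L$ and rejects every input not in $L$. *)

From Stdlib Require Import Reals List Arith Lia ZArith Bool.
Import ListNotations.

Inductive letter := La | Lb.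
Inductive tsym := Cent | Dollar | Let (x : letter).
Inductive hmove := HL | HR | HS.
Inductive dmove := DL | DR | DU | DD | DS.
Inductive phase := Ph0 | PhPi.
Inductive action := Toggle (p : phase) | NoAct.
Inductive src := Off | On (p : phase).

(* A 2OIA. Detector coordinates are in half-units (j = J/2, k = K/2).
   det_init is the prescribed initial grid position (clamped into the grid). *)
Record OIA := {
  Q : Type;
  Q_finite : exists l : list Q, forall q, In q l;
  q0 : Q;
  is_acc : Q -> bool;
  is_rej : Q -> bool;
  acc_rej_disj : forall q, is_acc q = true -> is_rej q = false;
  delta : Q -> tsym -> bool -> Q * hmove * dmove * action;
  det_init : nat * nat;
  kcrash : nat
}.

Definition tape_at (w : list letter) (i : nat) : tsym :=
  match i with
  | 0 => Cent
  | S i' => match nth_error w i' with Some x => Let x | None => Dollar end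
  end.

Record config (M : OIA) := mkcfg {
  st : Q M;
  head : nat;
  dJ : nat;
  dK : nat;
  srcs : nat -> src;
  runlen : nat -> nat;      (* length of the current toggle run on source m *)
  ntcount : nat -> nat;     (* number of completed non-transient runs on m *)
  time : nat                (* head moves + detector moves so far *)
}.
Arguments mkcfg {M}.
Arguments st {M}. Arguments head {M}. Arguments dJ {M}. Arguments dK {M}.
Arguments srcs {M}. Arguments runlen {M}. Arguments ntcount {M}. Arguments time {M}.

(* the detector at (J/2, K/2) sees the source at (m,0) iff |m - J/2| <= K/2 *)
Definition visible (m J K : nat) : bool :=
  Nat.leb (2 * m) (J + K) && Nat.leb J (2 * m + K).

Definition phval (p : phase) : R := match p with Ph0 => 0%R | PhPi => PI end.

Definition dist (m J K : nat) : R :=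
  sqrt ((INR m - INR J / 2) ^ 2 + (INR K / 2) ^ 2)%R.

(* one real component (f = cos: real part, f = sin: imaginary part) of
   A0 r_m^{-1} e^{i(phi_m + 2 pi r_m / lambda)} *)
Definition contrib (A0 lam : R) (f : R -> R) (s : src) (m J K : nat) : R :=
  match s with
  | Off => 0%R
  | On p => if visible m J K
            then (A0 / dist m J K * f (phval p + 2 * PI * dist m J K / lam))%R
            else 0%R
  end.

Definition cells (n : nat) : list nat := seq 0 (n + 2).

Definition resultant_part (A0 lam : R) (f : R -> R) (n : nat) (s : nat -> src)
  (J K : nat) : R :=
  fold_right Rplus 0%R (map (fun m => contrib A0 lam f (s m) m J K) (cells n)).

(* a switched-on visible source at distance 0 (detector placed on it):
   infinite amplitude, counted as nonzero resultant *)
Definition zero_hit (n : nat) (s : nat -> src) (J K : nat) : bool :=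
  existsb (fun m => match s m with Off => false | On _ =>
                     Nat.eqb (2 * m) J && Nat.eqb K 0 end) (cells n).

(* detector output: true = 1 (resultant nonzero), false = 0 *)
Definition det_output (A0 lam : R) (n : nat) (s : nat -> src) (J K : nat) : bool :=
  zero_hit n s J K ||
  (if Req_dec_T (resultant_part A0 lam cos n s J K) 0%R then
     if Req_dec_T (resultant_part A0 lam sin n s J K) 0%R then false else true
   else true).

Inductive outcome := Accept (t : nat) | Reject (t : nat) | Crash | OutOfFuel.

Definition toggle (p : phase) (s : src) : src :=
  match s with Off => On p | On _ => Off end.

Definition is_move_h (h : hmove) : nat := match h with HS => 0 | _ => 1 end.
Definition is_move_d (d : dmove) : nat := match d with DS => 0 | _ => 1 end.

(* one step; None = crash *)
Definition step (M : OIA) (A0 lam : R) (w : list letter) (c : config M)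
  : option (config M) :=
  let n := length w in
  let sym := tape_at w (head c) in
  let b := det_output A0 lam n (srcs c) (dJ c) (dK c) in
  match delta M (st c) sym b with
  | (q', hm, dm, act) =>
    let toggled m := match act with Toggle _ => Nat.eqb m (head c) | NoAct => false end in
    let srcs' m := match act with
                   | Toggle p => if Nat.eqb m (head c) then toggle p (srcs c m) else srcs c m
                   | NoAct => srcs c m end in
    let runlen' m := if toggled m then S (runlen c m) else 0 in
    let ntcount' m := if toggled m then ntcount c m
                      else if Nat.odd (runlen c m) then S (ntcount c m) else ntcount c m in
    let head' := match hm with HL => pred (head c) | HR => Nat.min (S (head c)) (S n)
                               | HS => head c end in
    let J := dJ c in let K := dK c in let B := 2 * (S n) in
    let J' := match dm with DL => pred J | DR => Nat.min (S J) B | _ => J end in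
    let K' := match dm with DD => pred K | DU => Nat.min (S K) B | _ => K end in
    if existsb (fun m => Nat.ltb (kcrash M) (ntcount' m)) (cells n) then None
    else Some (mkcfg q' head' J' K' srcs' runlen' ntcount'
                     (time c + is_move_h hm + is_move_d dm))
  end.

(* halting: in an accepting or rejecting state. Pending toggle runs are closed
   (possibly causing a crash); accept iff accepting state and detector output 0. *)
Definition halt_result (M : OIA) (A0 lam : R) (w : list letter) (c : config M)
  : outcome :=
  let n := length w in
  if existsb (fun m => Nat.ltb (kcrash M)
        (if Nat.odd (runlen c m) then S (ntcount c m) else ntcount c m)) (cells n)
  then Crash
  else if is_acc M (st c) && negb (det_output A0 lam n (srcs c) (dJ c) (dK c))
  then Accept (time c) else Reject (time c).

Fixpoint run (M : OIA) (A0 lam : R) (w : list letter) (fuel : nat) (c : config M)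
  : outcome :=
  if is_acc M (st c) || is_rej M (st c) then halt_result M A0 lam w c
  else match fuel with
       | 0 => OutOfFuel
       | S f => match step M A0 lam w c with
                | None => Crash
                | Some c' => run M A0 lam w f c'
                end
       end.

Definition init_config (M : OIA) (w : list letter) : config M :=
  let B := 2 * S (length w) in
  mkcfg (q0 M) 0 (Nat.min (fst (det_init M)) B) (Nat.min (snd (det_init M)) B)
        (fun _ => Off) (fun _ => 0) (fun _ => 0) 0.

Definition accepts (M : OIA) (A0 lam : R) (w : list letter) : Prop :=
  exists fuel t, run M A0 lam w fuel (init_config M w) = Accept t.

Definition rejects (M : OIA) (A0 lam : R) (w : list letter) : Prop :=
  exists fuel t, run M A0 lam w fuel (init_config M w) = Reject t.

Definition decides (M : OIA) (A0 lam : R) (L : list letter -> Prop) : Prop :=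
  forall w, (L w -> accepts M A0 lam w) /\ (~ L w -> rejects M A0 lam w).

Definition linear_time (M : OIA) (A0 lam : R) : Prop :=
  exists a b : nat, forall w fuel t,
    (run M A0 lam w fuel (init_config M w) = Accept t \/
     run M A0 lam w fuel (init_config M w) = Reject t) ->
    t <= a * length w + b.

Definition Lpal (w : list letter) : Prop := exists u, w = u ++ rev u.

(* real algebraic number: root of a nonzero integer polynomial (Horner form) *)
Definition poly_evalZ (p : list Z) (x : R) : R :=
  fold_right (fun c acc => IZR c + x * acc)%R 0%R p.

Definition algebraic (x : R) : Prop :=
  exists p : list Z, (exists c, In c p /\ c <> 0%Z) /\ poly_evalZ p x = 0%R.

From Stdlib Require Import Reals Lra Lia List Bool Classical FunctionalExtensionality.
Import ListNotations.

(* While the head scans the input and checks that its length n = 2k is even,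
   the detector moves right at half the head's speed, so that it ends above the
   centre k + 1/2 of the word, at height 1/2, where it sees only cells k and k+1.
   Walking back to the left end, the head switches on source m with phase 0 or pi
   according to the letter w_m, with the opposite convention in the right half;
   the output first becomes 1 when source k+1 is lit, which tells the head it has
   crossed the middle.  Sources m and 2k+1-m are equidistant from every point of
   the line x = k + 1/2, so their waves cancel exactly when w_m = w_(2k+1-m) and
   add up to twice one nonzero wave otherwise.  Raising the detector by half a
   unit per head step brings the symmetric pairs into view one at a time,
   innermost first: the first mismatched pair is the only one not to cancel, so
   the output stays 0 all the way up iff w is a palindrome.  The whole run takes
   about 5n moves, and no arithmetic property of the wavelength is needed. *)

(** * Finite sums *)

Definition sum_below (f : nat -> R) (N : nat) : R :=
  fold_right Rplus 0%R (map f (seq 0 N)).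

Lemma sum_below_S f N : sum_below f (S N) = (sum_below f N + f N)%R.
Proof.
  unfold sum_below. rewrite seq_S, map_app, fold_right_app. simpl.
  induction (map f (seq 0 N)) as [|x l IH]; simpl; [|rewrite IH]; lra.
Qed.

Lemma sum_below_shift f N :
  sum_below f (S N) = (f 0%nat + sum_below (fun m => f (S m)) N)%R.
Proof. unfold sum_below. simpl. rewrite <- seq_shift, map_map. reflexivity. Qed.

Lemma sum_below_ext f g N :
  (forall m, m < N -> f m = g m) -> sum_below f N = sum_below g N.
Proof.
  intros Hfg. unfold sum_below. f_equal. apply map_ext_in.
  intros m Hm. apply in_seq in Hm. apply Hfg. lia.
Qed.

Lemma sum_below_zero f N : (forall m, m < N -> f m = 0%R) -> sum_below f N = 0%R.
Proof.
  induction N as [|N IH]; intros Hf; [reflexivity|].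
  rewrite sum_below_S, IH, Hf by auto with arith. lra.
Qed.

Lemma sum_below_single f N i :
  i < N -> (forall m, m < N -> m <> i -> f m = 0%R) -> sum_below f N = f i.
Proof.
  induction N as [|N IH]; intros Hi Hf; [lia|].
  rewrite sum_below_S. destruct (Nat.eq_dec N i) as [<-|Hne].
  - rewrite sum_below_zero; [lra|]. intros m Hm. apply Hf; lia.
  - rewrite IH, (Hf N); [lra|lia|lia|lia|]. intros m Hm. apply Hf; lia.
Qed.

Lemma sum_below_fold_mirror f k :
  sum_below f (2 * k + 2) =
  sum_below (fun i => f i + f (2 * k + 1 - i)%nat)%R (S k).
Proof.
  revert f; induction k as [|k IH]; intros f.
  - unfold sum_below. simpl. lra.
  - replace (2 * S k + 2) with (S (S (2 * k + 2))) by lia.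
    rewrite sum_below_S, sum_below_shift, IH, (sum_below_shift _ (S k)).
    rewrite (sum_below_ext _ (fun i => f (S i) + f (2 * S k + 1 - S i)%nat)%R).
    + replace (2 * S k + 1 - 0) with (S (2 * k + 2)) by lia. lra.
    + intros i Hi. do 2 f_equal. lia.
Qed.

(** * Interference *)

Section Optics.

Variables A0 lam : R.

Lemma contrib_invisible g s m J K :
  visible m J K = false -> contrib A0 lam g s m J K = 0%R.
Proof. intros Hv. destruct s; simpl; [|rewrite Hv]; reflexivity. Qed.

Lemma visible_reflect m J K : m <= J -> visible (J - m) J K = visible m J K.
Proof.
  intros Hm. unfold visible.
  destruct (Nat.leb_spec (2 * (J - m)) (J + K)), (Nat.leb_spec J (2 * (J - m) + K)),
    (Nat.leb_spec (2 * m) (J + K)), (Nat.leb_spec J (2 * m + K)); simpl; auto; lia.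
Qed.

Lemma dist_reflect m J K : m <= J -> dist (J - m) J K = dist m J K.
Proof.
  intros Hm. unfold dist. rewrite minus_INR by exact Hm. f_equal. field.
Qed.

Lemma contrib_reflect g s m J K :
  m <= J -> contrib A0 lam g s (J - m) J K = contrib A0 lam g s m J K.
Proof.
  intros Hm. destruct s; [reflexivity|].
  unfold contrib. rewrite visible_reflect, dist_reflect by exact Hm. reflexivity.
Qed.

Definition flip (p : phase) : phase := match p with Ph0 => PhPi | PhPi => Ph0 end.

Lemma contrib_flip g (g_antiperiodic : forall y, g (y + PI)%R = (- g y)%R) p m J K :
  contrib A0 lam g (On (flip p)) m J K = (- contrib A0 lam g (On p) m J K)%R.
Proof.
  unfold contrib. destruct (visible m J K); [|lra].
  destruct p; simpl; rewrite Rplus_0_l, (Rplus_comm PI), g_antiperiodic; ring.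
Qed.

Lemma dist_pos m J K : 1 <= K -> (0 < dist m J K)%R.
Proof.
  intros HK. unfold dist. apply sqrt_lt_R0. apply le_INR in HK. simpl in HK.
  assert (0 < (INR K / 2) ^ 2)%R by (apply pow_lt; lra).
  assert (0 <= (INR m - INR J / 2) ^ 2)%R by apply pow2_ge_0.
  lra.
Qed.

Lemma contrib_On_neq0 p m J K :
  (0 < A0)%R -> 1 <= K -> visible m J K = true ->
  contrib A0 lam cos (On p) m J K <> 0%R \/ contrib A0 lam sin (On p) m J K <> 0%R.
Proof.
  intros HA HK Hv. unfold contrib. rewrite Hv.
  set (x := (phval p + 2 * PI * dist m J K / lam)%R).
  assert (Hd := dist_pos m J K HK).
  assert (Hamp : (A0 / dist m J K <> 0)%R).
  { apply Rgt_not_eq. apply Rdiv_lt_0_compat; assumption. }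
  destruct (Req_dec (cos x) 0) as [Hc|Hc].
  - right. apply Rmult_integral_contrapositive. split; [exact Hamp|].
    intros Hs. pose proof (sin2_cos2 x) as Hsc. rewrite Hc, Hs in Hsc.
    unfold Rsqr in Hsc. lra.
  - left. apply Rmult_integral_contrapositive. split; assumption.
Qed.

Lemma resultant_part_sum g n s J K :
  resultant_part A0 lam g n s J K =
  sum_below (fun m => contrib A0 lam g (s m) m J K) (n + 2).
Proof. reflexivity. Qed.

Lemma zero_hit_above_ground n s J K : K <> 0 -> zero_hit n s J K = false.
Proof.
  intros HK. apply not_true_iff_false. intros Hz.
  apply existsb_exists in Hz as [m [_ Hm]]. destruct (s m); [discriminate|].
  apply andb_true_iff in Hm as [_ HK0]. apply Nat.eqb_eq in HK0. lia.
Qed.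

Lemma det_output_dark n s J K :
  K <> 0 ->
  resultant_part A0 lam cos n s J K = 0%R -> resultant_part A0 lam sin n s J K = 0%R ->
  det_output A0 lam n s J K = false.
Proof.
  intros HK Hc Hs. unfold det_output. rewrite zero_hit_above_ground by exact HK.
  destruct (Req_dec_T _ 0); [|contradiction]. destruct (Req_dec_T _ 0); [|contradiction].
  reflexivity.
Qed.

Lemma det_output_lit n s J K :
  K <> 0 ->
  resultant_part A0 lam cos n s J K <> 0%R \/ resultant_part A0 lam sin n s J K <> 0%R ->
  det_output A0 lam n s J K = true.
Proof.
  intros HK Hnz. unfold det_output. rewrite zero_hit_above_ground by exact HK.
  destruct (Req_dec_T _ 0); [|reflexivity]. destruct (Req_dec_T _ 0); [|reflexivity].
  tauto.
Qed.

End Optics.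

(** * Runs of a 2OIA *)

Section Runs.

Variables (M : OIA) (A0 lam : R) (w : list letter).

Lemma run_deterministic f1 f2 c o1 o2 :
  run M A0 lam w f1 c = o1 -> run M A0 lam w f2 c = o2 ->
  o1 <> OutOfFuel -> o2 <> OutOfFuel -> o1 = o2.
Proof.
  revert f2 c. induction f1 as [|f1 IH]; intros [|f2] c H1 H2 N1 N2;
    simpl in H1, H2; destruct (is_acc M (st c) || is_rej M (st c)); subst; try congruence.
  destruct (step M A0 lam w c) as [c'|]; [|reflexivity].
  eapply IH; eauto.
Qed.

Definition single_toggles (c : config M) : Prop :=
  forall m, ntcount c m + runlen c m <= 1 /\
            (srcs c m = Off -> ntcount c m = 0 /\ runlen c m = 0).

Definition conf_is (c : config M) q h J K s t : Prop :=
  st c = q /\ head c = h /\ dJ c = J /\ dK c = K /\ srcs c = s /\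
  single_toggles c /\ time c = t.

Definition settles (c : config M) (P : Prop) (T : nat) : Prop :=
  exists fuel t, t <= T /\
    (P /\ run M A0 lam w fuel c = Accept t \/ ~ P /\ run M A0 lam w fuel c = Reject t).

Definition settles_from q h J K s t (P : Prop) (T : nat) : Prop :=
  forall c, conf_is c q h J K s t -> settles c P T.

Lemma settles_from_weaken q h J K s t P T T' :
  T <= T' -> settles_from q h J K s t P T -> settles_from q h J K s t P T'.
Proof.
  intros HT Hs c Hc. destruct (Hs c Hc) as (f & t' & Ht' & Hres).
  exists f, t'. split; [lia|exact Hres].
Qed.

Lemma settles_from_iff q h J K s t P P' T :
  (P <-> P') -> settles_from q h J K s t P T -> settles_from q h J K s t P' T.
Proof.
  intros HP Hs c Hc. destruct (Hs c Hc) as (f & t' & Ht' & Hres).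
  exists f, t'. split; [exact Ht'|]. rewrite <- HP. exact Hres.
Qed.

Lemma conf_is_init :
  conf_is (init_config M w) (q0 M) 0
    (Nat.min (fst (det_init M)) (2 * S (length w)))
    (Nat.min (snd (det_init M)) (2 * S (length w))) (fun _ => Off) 0.
Proof.
  repeat split; simpl; lia.
Qed.

Hypothesis kcrash_pos : 1 <= kcrash M.

Lemma closed_count c m :
  single_toggles c ->
  (if Nat.odd (runlen c m) then S (ntcount c m) else ntcount c m) =
  ntcount c m + runlen c m.
Proof.
  intros Hsingle. destruct (Hsingle m) as [Hle _].
  destruct (runlen c m) as [|[|r]]; simpl; lia.
Qed.

Lemma settles_from_halt q h J K s t P T :
  is_acc M q || is_rej M q = true -> t <= T ->
  (if is_acc M q && negb (det_output A0 lam (length w) s J K) then P else ~ P) ->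
  settles_from q h J K s t P T.
Proof.
  intros Hhalt HT HP c (Hq & Hh & HJ & HK & Hs & Hsingle & Ht).
  exists 0, t. split; [exact HT|].
  assert (Hrun : run M A0 lam w 0 c = halt_result M A0 lam w c)
    by (simpl; rewrite Hq, Hhalt; reflexivity).
  rewrite Hrun. unfold halt_result.
  replace (existsb _ _) with false.
  2: { symmetry. apply not_true_iff_false. intros Hx.
       apply existsb_exists in Hx as [m [_ Hm]]. apply Nat.ltb_lt in Hm.
       rewrite closed_count in Hm by exact Hsingle. destruct (Hsingle m). lia. }
  rewrite Hq, HJ, HK, Hs, Ht. destruct (is_acc M q && _); [left|right]; auto.
Qed.

Definition head_after (h : nat) (hm : hmove) : nat :=
  match hm with HL => pred h | HR => Nat.min (S h) (S (length w)) | HS => h end.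

Definition dJ_after (J : nat) (dm : dmove) : nat :=
  match dm with DL => pred J | DR => Nat.min (S J) (2 * S (length w)) | _ => J end.

Definition dK_after (K : nat) (dm : dmove) : nat :=
  match dm with DD => pred K | DU => Nat.min (S K) (2 * S (length w)) | _ => K end.

Definition srcs_after (s : nat -> src) (h : nat) (act : action) : nat -> src :=
  fun m => match act with
           | Toggle p => if Nat.eqb m h then toggle p (s m) else s m
           | NoAct => s m
           end.

Lemma settles_from_step q h J K s t P T q' hm dm act :
  is_acc M q || is_rej M q = false ->
  delta M q (tape_at w h) (det_output A0 lam (length w) s J K) = (q', hm, dm, act) ->
  (forall p, act = Toggle p -> s h = Off) ->
  settles_from q' (head_after h hm) (dJ_after J dm) (dK_after K dm)
    (srcs_after s h act) (t + is_move_h hm + is_move_d dm) P T ->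
  settles_from q h J K s t P T.
Proof.
  intros Hgoing Hdelta Hfresh Hnext c (Hq & Hh & HJ & HK & Hs & Hsingle & Ht).
  destruct c as [q1 h1 J1 K1 s1 rl nt t1]; simpl in *; subst.
  pose proof (fun m => closed_count _ m Hsingle) as Hclosed; simpl in Hclosed.
  unfold single_toggles in Hsingle; simpl in Hsingle.
  set (toggled := fun m => match act with Toggle _ => m =? h | NoAct => false end).
  set (c' := mkcfg q' (head_after h hm) (dJ_after J dm) (dK_after K dm)
               (srcs_after s h act) (fun m => if toggled m then S (rl m) else 0)
               (fun m => if toggled m then nt m
                         else if Nat.odd (rl m) then S (nt m) else nt m)
               (t + is_move_h hm + is_move_d dm)).
  assert (Hsingle' : single_toggles c').
  { intros m. unfold c', toggled, srcs_after; simpl.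
    destruct act as [p|]; [destruct (Nat.eqb_spec m h) as [->|Hne]|].
    2-3: rewrite Hclosed; destruct (Hsingle m) as [Hle Hoff];
         split; [lia|intros Hm; destruct (Hoff Hm); lia].
    destruct (proj2 (Hsingle h) (Hfresh p eq_refl)) as [-> ->].
    rewrite (Hfresh p eq_refl). split; [lia|discriminate]. }
  assert (Hstep : step M A0 lam w (mkcfg q h J K s rl nt t) = Some c').
  { unfold step. simpl. rewrite Hdelta.
    replace (existsb _ _) with false; [reflexivity|].
    symmetry. apply not_true_iff_false. intros Hx.
    apply existsb_exists in Hx as [m [_ Hm]]. apply Nat.ltb_lt in Hm.
    destruct (Hsingle' m) as [Hle _]. unfold c', toggled in Hle; simpl in Hle. lia. }
  assert (Hc' : conf_is c' q' (head_after h hm) (dJ_after J dm) (dK_after K dm)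
                  (srcs_after s h act) (t + is_move_h hm + is_move_d dm))
    by (do 5 (split; [reflexivity|]); split; [exact Hsingle'|reflexivity]).
  destruct (Hnext c' Hc') as (f & t' & HT & Hres).
  exists (S f), t'. split; [exact HT|]. simpl. rewrite Hgoing, Hstep. exact Hres.
Qed.

End Runs.

Lemma decides_of_settles (M : OIA) A0 lam (L : list letter -> Prop) (T : list letter -> nat) :
  (forall w, settles M A0 lam w (init_config M w) (L w) (T w)) ->
  decides M A0 lam L /\
  (forall w fuel t, run M A0 lam w fuel (init_config M w) = Accept t \/
                    run M A0 lam w fuel (init_config M w) = Reject t -> t <= T w).
Proof.
  intros Hsettles. split.
  - intros w. destruct (Hsettles w) as (f & t & _ & [[HL Hrun]|[HL Hrun]]);
      split; intros HL'; try contradiction; exists f, t; exact Hrun.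
  - intros w f' t' Hrun'. destruct (Hsettles w) as (f & t & HT & Hres).
    destruct Hres as [[_ Hrun]|[_ Hrun]], Hrun' as [Hrun'|Hrun'];
      pose proof (run_deterministic _ _ _ _ _ _ _ _ _ Hrun Hrun'
                    ltac:(discriminate) ltac:(discriminate)) as E;
      inversion E; lia.
Qed.

(** * The palindrome automaton *)

Inductive pal_state := qStart | qEven | qOdd | qRight | qLeft | qRise | qAcc | qRej.

Definition letter_phase (x : letter) : phase := match x with La => Ph0 | Lb => PhPi end.

Definition rise_delta (s : tsym) (b : bool) : pal_state * hmove * dmove * action :=
  if b then (qRej, HS, DS, NoAct)
  else match s with Dollar => (qAcc, HS, DS, NoAct) | _ => (qRise, HR, DU, NoAct) end.

Definition pal_delta (q : pal_state) (s : tsym) (b : bool) : pal_state * hmove * dmove * action :=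
  match q with
  | qStart => (qEven, HR, DR, NoAct)
  | qEven => match s with Let _ => (qOdd, HR, DR, NoAct) | _ => (qRight, HL, DU, NoAct) end
  | qOdd => match s with Let _ => (qEven, HR, DR, NoAct) | _ => (qRej, HS, DS, NoAct) end
  | qRight => match s with
              | Let x => if b then (qLeft, HL, DS, Toggle (letter_phase x))
                         else (qRight, HL, DS, Toggle (flip (letter_phase x)))
              | _ => rise_delta s b
              end
  | qLeft => match s with
             | Let x => (qLeft, HL, DS, Toggle (letter_phase x))
             | _ => rise_delta s b
             end
  | qRise => rise_delta s b
  | qAcc => (qAcc, HS, DS, NoAct)
  | qRej => (qRej, HS, DS, NoAct)
  end.

Definition pal_acc (q : pal_state) : bool := match q with qAcc => true | _ => false end.
Definition pal_rej (q : pal_state) : bool := match q with qRej => true | _ => false end.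

Lemma pal_state_finite : exists l : list pal_state, forall q, In q l.
Proof.
  exists [qStart; qEven; qOdd; qRight; qLeft; qRise; qAcc; qRej].
  intros []; simpl; tauto.
Qed.

Lemma pal_acc_not_rej q : pal_acc q = true -> pal_rej q = false.
Proof. destruct q; simpl; congruence. Qed.

Definition pal_oia : OIA := {|
  Q := pal_state; Q_finite := pal_state_finite; q0 := qStart;
  is_acc := pal_acc; is_rej := pal_rej; acc_rej_disj := pal_acc_not_rej;
  delta := pal_delta; det_init := (0, 0); kcrash := 1 |}.

Section Palindromes.

Variables (A0 lam : R) (w : list letter).
Hypothesis A0_pos : (0 < A0)%R.

Local Notation settles_pal := (settles_from pal_oia A0 lam w).

Ltac step_arith := cbv [head_after dJ_after dK_after is_move_h is_move_d]; lia.

Lemma pal_step q h J K s t P T q' hm dm act h' J' K' s' t' :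
  pal_acc q || pal_rej q = false ->
  pal_delta q (tape_at w h) (det_output A0 lam (length w) s J K) = (q', hm, dm, act) ->
  (forall p, act = Toggle p -> s h = Off) ->
  settles_pal q' h' J' K' s' t' P T ->
  head_after w h hm = h' -> dJ_after w J dm = J' -> dK_after w K dm = K' ->
  srcs_after s h act = s' -> t + is_move_h hm + is_move_d dm = t' ->
  settles_pal q h J K s t P T.
Proof.
  intros Hgoing Hdelta Hfresh Hnext <- <- <- <- <-.
  exact (settles_from_step pal_oia A0 lam w (le_n 1) q h J K s t P T q' hm dm act
           Hgoing Hdelta Hfresh Hnext).
Qed.

Lemma pal_stop q h J K s t P T q' :
  pal_acc q || pal_rej q = false ->
  pal_delta q (tape_at w h) (det_output A0 lam (length w) s J K) = (q', HS, DS, NoAct) ->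
  pal_acc q' || pal_rej q' = true -> t <= T ->
  (if pal_acc q' && negb (det_output A0 lam (length w) s J K) then P else ~ P) ->
  settles_pal q h J K s t P T.
Proof.
  intros Hgoing Hdelta Hhalt HT HP.
  eapply pal_step; [exact Hgoing|exact Hdelta|discriminate
    |exact (settles_from_halt pal_oia A0 lam w (le_n 1) q' h J K s t P T Hhalt HT HP)
    |reflexivity..|simpl; lia].
Qed.

Definition cell_letter (m : nat) : letter := nth (m - 1) w La.

Lemma tape_at_letter m : 1 <= m <= length w -> tape_at w m = Let (cell_letter m).
Proof.
  intros Hm. destruct m as [|m]; [lia|]. simpl. unfold cell_letter.
  rewrite (nth_error_nth' w La), Nat.sub_succ, Nat.sub_0_r by lia. reflexivity.
Qed.

Lemma tape_at_end : tape_at w (S (length w)) = Dollar.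
Proof. simpl. rewrite (proj2 (nth_error_None w (length w))) by lia. reflexivity. Qed.

Lemma tape_at_not_end m : m <= length w -> tape_at w m <> Dollar.
Proof.
  intros Hm. destruct m as [|m]; [discriminate|].
  rewrite tape_at_letter by lia. discriminate.
Qed.

Definition mirror_phase (k m : nat) (x : letter) : phase :=
  if m <=? k then letter_phase x else flip (letter_phase x).

Definition lit_beyond (k h : nat) : nat -> src :=
  fun m => if (h <? m) && (m <=? 2 * k) then On (mirror_phase k m (cell_letter m)) else Off.

Lemma mirror_phase_left k m x : m <= k -> mirror_phase k m x = letter_phase x.
Proof. intros Hm. unfold mirror_phase. rewrite (proj2 (Nat.leb_le m k)) by exact Hm. reflexivity. Qed.

Lemma mirror_phase_right k m x : k < m -> mirror_phase k m x = flip (letter_phase x).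
Proof. intros Hm. unfold mirror_phase. rewrite (proj2 (Nat.leb_gt m k)) by exact Hm. reflexivity. Qed.

Lemma lit_beyond_on k h i :
  h < i <= 2 * k -> lit_beyond k h i = On (mirror_phase k i (cell_letter i)).
Proof.
  intros Hi. unfold lit_beyond.
  rewrite (proj2 (Nat.ltb_lt h i)), (proj2 (Nat.leb_le i (2 * k))) by lia.
  reflexivity.
Qed.

Lemma lit_beyond_left k h i :
  h < i <= k -> lit_beyond k h i = On (letter_phase (cell_letter i)).
Proof. intros Hi. rewrite lit_beyond_on, mirror_phase_left by lia. reflexivity. Qed.

Lemma lit_beyond_right k h i :
  h < i -> k < i <= 2 * k -> lit_beyond k h i = On (flip (letter_phase (cell_letter i))).
Proof. intros Hh Hi. rewrite lit_beyond_on, mirror_phase_right by lia. reflexivity. Qed.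

Lemma lit_beyond_off k h i : i <= h \/ 2 * k < i -> lit_beyond k h i = Off.
Proof.
  intros Hi. unfold lit_beyond.
  destruct (Nat.ltb_spec h i), (Nat.leb_spec i (2 * k)); simpl; auto; lia.
Qed.

Lemma lit_beyond_toggle k h :
  1 <= h <= 2 * k ->
  srcs_after (lit_beyond k h) h (Toggle (mirror_phase k h (cell_letter h))) =
  lit_beyond k (pred h).
Proof.
  intros Hh. apply functional_extensionality. intros m. unfold srcs_after.
  destruct (Nat.eqb_spec m h) as [->|Hne].
  - rewrite lit_beyond_off by lia. unfold lit_beyond.
    rewrite (proj2 (Nat.ltb_lt (pred h) h)), (proj2 (Nat.leb_le h (2 * k))) by lia.
    reflexivity.
  - unfold lit_beyond. destruct (Nat.ltb_spec (pred h) m), (Nat.ltb_spec h m); simpl; auto; lia.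
Qed.

Lemma visible_left_half k i K : i <= k -> visible i (2 * k + 1) K = (2 * k + 1 - 2 * i <=? K).
Proof.
  intros Hi. unfold visible.
  destruct (Nat.leb_spec (2 * i) (2 * k + 1 + K)), (Nat.leb_spec (2 * k + 1) (2 * i + K)),
    (Nat.leb_spec (2 * k + 1 - 2 * i) K); simpl; auto; lia.
Qed.

Lemma visible_middle k m : visible m (2 * k + 1) 1 = (m =? k) || (m =? k + 1).
Proof.
  unfold visible.
  destruct (Nat.leb_spec (2 * m) (2 * k + 1 + 1)), (Nat.leb_spec (2 * k + 1) (2 * m + 1)),
    (Nat.eqb_spec m k), (Nat.eqb_spec m (k + 1)); simpl; auto; lia.
Qed.

Definition matched (k K : nat) : Prop :=
  forall i, 1 <= i <= k -> visible i (2 * k + 1) K = true ->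
  cell_letter i = cell_letter (2 * k + 1 - i).

Lemma matched_ground k : matched k 0.
Proof.
  intros i Hi Hv. rewrite visible_left_half in Hv by lia. apply Nat.leb_le in Hv. lia.
Qed.

Lemma matched_mono k K K' : K <= K' -> matched k K' -> matched k K.
Proof.
  intros HK Hm i Hi Hv. apply Hm; [exact Hi|].
  rewrite visible_left_half in * by lia. apply Nat.leb_le in Hv. apply Nat.leb_le. lia.
Qed.

Lemma Lpal_iff_matched k : length w = 2 * k -> (Lpal w <-> matched k (2 * k + 2)).
Proof.
  intros Hn. split.
  - intros [u Hu] i Hi _. unfold cell_letter. rewrite Hu in *.
    rewrite length_app, length_rev in Hn.
    rewrite app_nth1, app_nth2, rev_nth by lia. f_equal. lia.
  - intros Hm. exists (firstn k w).
    assert (Hk : length (firstn k w) = k) by (rewrite length_firstn; lia).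
    apply nth_ext with (d := La) (d' := La).
    { rewrite length_app, length_rev, Hk. lia. }
    intros j Hj. destruct (Nat.lt_ge_cases j k).
    + rewrite app_nth1, nth_firstn by lia.
      destruct (Nat.ltb_spec j k); [reflexivity|lia].
    + rewrite app_nth2, rev_nth, nth_firstn, Hk by lia.
      destruct (Nat.ltb_spec (k - S (j - k)) k); [|lia].
      assert (E := Hm (2 * k - j) ltac:(lia)).
      rewrite visible_left_half, (proj2 (Nat.leb_le _ _)) in E by lia.
      unfold cell_letter in E.
      replace (2 * k - j - 1) with (k - S (j - k)) in E by lia.
      replace (2 * k + 1 - (2 * k - j) - 1) with j in E by lia.
      symmetry. apply E. reflexivity.
Qed.

Lemma Lpal_even_length : Lpal w -> Nat.even (length w) = true.
Proof.
  intros [u Hu]. rewrite Hu, length_app, length_rev.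
  apply Nat.even_spec. exists (length u). lia.
Qed.

Lemma letter_phase_other x y : x <> y -> letter_phase y = flip (letter_phase x).
Proof. destruct x, y; simpl; congruence. Qed.

Definition mirror_pair (g : R -> R) (k K i : nat) : R :=
  (contrib A0 lam g (lit_beyond k 0 i) i (2 * k + 1) K +
   contrib A0 lam g (lit_beyond k 0 (2 * k + 1 - i)) (2 * k + 1 - i) (2 * k + 1) K)%R.

Section MirrorPairs.

Variable g : R -> R.
Hypothesis g_antiperiodic : forall y, g (y + PI)%R = (- g y)%R.

Lemma mirror_pair_ground k K : mirror_pair g k K 0 = 0%R.
Proof. unfold mirror_pair. rewrite !lit_beyond_off by lia. simpl. lra. Qed.

Lemma mirror_pair_diff k K i :
  1 <= i <= k ->
  mirror_pair g k K i =
  (contrib A0 lam g (On (letter_phase (cell_letter i))) i (2 * k + 1) K -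
   contrib A0 lam g (On (letter_phase (cell_letter (2 * k + 1 - i)))) i (2 * k + 1) K)%R.
Proof.
  intros Hi. unfold mirror_pair.
  rewrite lit_beyond_left, lit_beyond_right, contrib_reflect,
    (contrib_flip A0 lam g g_antiperiodic) by lia.
  lra.
Qed.

Lemma mirror_pair_cancel k K i :
  1 <= i <= k ->
  (visible i (2 * k + 1) K = true -> cell_letter i = cell_letter (2 * k + 1 - i)) ->
  mirror_pair g k K i = 0%R.
Proof.
  intros Hi Heq. rewrite mirror_pair_diff by exact Hi.
  destruct (visible i (2 * k + 1) K) eqn:Hv.
  - rewrite Heq by reflexivity. lra.
  - rewrite !contrib_invisible by exact Hv. lra.
Qed.

Lemma mirror_pair_double k K i :
  1 <= i <= k -> cell_letter i <> cell_letter (2 * k + 1 - i) ->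
  mirror_pair g k K i =
  (2 * contrib A0 lam g (On (letter_phase (cell_letter i))) i (2 * k + 1) K)%R.
Proof.
  intros Hi Hne.
  rewrite mirror_pair_diff, (letter_phase_other _ _ Hne),
    (contrib_flip A0 lam g g_antiperiodic) by exact Hi.
  lra.
Qed.

Lemma rise_resultant k K :
  resultant_part A0 lam g (2 * k) (lit_beyond k 0) (2 * k + 1) K =
  sum_below (mirror_pair g k K) (S k).
Proof. rewrite resultant_part_sum. apply sum_below_fold_mirror. Qed.

Lemma rise_resultant_matched k K :
  matched k K -> resultant_part A0 lam g (2 * k) (lit_beyond k 0) (2 * k + 1) K = 0%R.
Proof.
  intros Hm. rewrite rise_resultant. apply sum_below_zero.
  intros [|i] Hi; [apply mirror_pair_ground|].
  apply mirror_pair_cancel; [lia|]. intros Hv. apply Hm; [lia|exact Hv].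
Qed.

Lemma rise_resultant_single k K i :
  1 <= i <= k -> cell_letter i <> cell_letter (2 * k + 1 - i) ->
  (forall j, 1 <= j <= k -> j <> i -> visible j (2 * k + 1) K = true ->
             cell_letter j = cell_letter (2 * k + 1 - j)) ->
  resultant_part A0 lam g (2 * k) (lit_beyond k 0) (2 * k + 1) K =
  (2 * contrib A0 lam g (On (letter_phase (cell_letter i))) i (2 * k + 1) K)%R.
Proof.
  intros Hi Hne Hothers. rewrite rise_resultant, (sum_below_single _ (S k) i).
  - apply mirror_pair_double; assumption.
  - lia.
  - intros [|j] Hj Hji; [apply mirror_pair_ground|].
    apply mirror_pair_cancel; [lia|]. apply Hothers; lia.
Qed.

Lemma right_resultant k h :
  k <= h ->
  resultant_part A0 lam g (2 * k) (lit_beyond k h) (2 * k + 1) 1 =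
  contrib A0 lam g (lit_beyond k h (k + 1)) (k + 1) (2 * k + 1) 1.
Proof.
  intros Hh. rewrite resultant_part_sum.
  apply (sum_below_single (fun m => contrib A0 lam g (lit_beyond k h m) m (2 * k + 1) 1));
    [lia|].
  intros m Hm Hne. destruct (Nat.eq_dec m k) as [->|Hk].
  - rewrite lit_beyond_off by lia. reflexivity.
  - apply contrib_invisible. rewrite visible_middle.
    destruct (Nat.eqb_spec m k), (Nat.eqb_spec m (k + 1)); simpl; auto; lia.
Qed.

End MirrorPairs.

Lemma det_output_rise_matched k K :
  1 <= K -> matched k K ->
  det_output A0 lam (2 * k) (lit_beyond k 0) (2 * k + 1) K = false.
Proof.
  intros HK Hm. apply det_output_dark; [lia| |];
    apply rise_resultant_matched; auto; [exact neg_cos|exact neg_sin].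
Qed.

Lemma det_output_rise_mismatch k h :
  matched k h -> ~ matched k (S h) ->
  det_output A0 lam (2 * k) (lit_beyond k 0) (2 * k + 1) (S h) = true.
Proof.
  intros Hmh Hmis.
  assert (Hex : exists i, 1 <= i <= k /\ visible i (2 * k + 1) (S h) = true /\
                          cell_letter i <> cell_letter (2 * k + 1 - i)).
  { apply NNPP. intros Hno. apply Hmis. intros i Hi Hv.
    apply NNPP. intros Hne. apply Hno. exists i. auto. }
  destruct Hex as (i & Hi & Hv & Hne).
  assert (Hedge : forall j, 1 <= j <= k -> visible j (2 * k + 1) (S h) = true ->
                  visible j (2 * k + 1) h = false -> 2 * k + 1 - 2 * j = S h).
  { intros j Hj Hvj Hnj. rewrite !visible_left_half in * by lia.
    apply Nat.leb_le in Hvj. apply Nat.leb_gt in Hnj. lia. }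
  assert (Hi_edge : 2 * k + 1 - 2 * i = S h).
  { apply Hedge; [exact Hi|exact Hv|].
    apply not_true_iff_false. intros Hvh. exact (Hne (Hmh i Hi Hvh)). }
  assert (Hothers : forall j, 1 <= j <= k -> j <> i -> visible j (2 * k + 1) (S h) = true ->
                    cell_letter j = cell_letter (2 * k + 1 - j)).
  { intros j Hj Hji Hvj. apply Hmh; [exact Hj|].
    destruct (visible j (2 * k + 1) h) eqn:Hvh; [reflexivity|].
    pose proof (Hedge j Hj Hvj Hvh). lia. }
  apply det_output_lit; [lia|].
  rewrite (rise_resultant_single cos neg_cos k (S h) i Hi Hne Hothers),
    (rise_resultant_single sin neg_sin k (S h) i Hi Hne Hothers).
  destruct (contrib_On_neq0 A0 lam (letter_phase (cell_letter i)) i (2 * k + 1) (S h)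
              A0_pos ltac:(lia) Hv); [left|right]; lra.
Qed.

Lemma det_output_right_dark k h :
  k < h -> det_output A0 lam (2 * k) (lit_beyond k h) (2 * k + 1) 1 = false.
Proof.
  intros Hh. apply det_output_dark; [lia| |];
    rewrite right_resultant, lit_beyond_off by lia; reflexivity.
Qed.

Lemma det_output_right_middle k :
  1 <= k -> det_output A0 lam (2 * k) (lit_beyond k k) (2 * k + 1) 1 = true.
Proof.
  intros Hk. apply det_output_lit; [lia|].
  rewrite !right_resultant, lit_beyond_right by lia.
  apply contrib_On_neq0; [exact A0_pos|lia|].
  rewrite visible_middle, Nat.eqb_refl, orb_true_r. reflexivity.
Qed.

Lemma settles_rise_mismatch k h q t T :
  length w = 2 * k -> h <= 2 * k + 1 -> pal_acc q || pal_rej q = false ->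
  (forall b, pal_delta q (tape_at w h) b = rise_delta (tape_at w h) b) ->
  matched k h -> ~ matched k (S h) -> t <= T ->
  settles_pal q h (2 * k + 1) (S h) (lit_beyond k 0) t (matched k (2 * k + 2)) T.
Proof.
  intros Hn Hh Hgoing Hrise Hmh Hmis HT.
  apply (pal_stop _ _ _ _ _ _ _ _ qRej); [exact Hgoing| |reflexivity|exact HT|].
  - rewrite Hrise, Hn, det_output_rise_mismatch by assumption. reflexivity.
  - simpl. intros Hall. apply Hmis. apply (matched_mono k (S h) (2 * k + 2)); [lia|exact Hall].
Qed.

Lemma settles_rise k :
  length w = 2 * k ->
  forall d h q, h + d = 2 * k + 1 -> pal_acc q || pal_rej q = false ->
  (forall b, pal_delta q (tape_at w h) b = rise_delta (tape_at w h) b) ->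
  matched k h ->
  settles_pal q h (2 * k + 1) (S h) (lit_beyond k 0) (6 * k + 4 + 2 * h)
    (matched k (2 * k + 2)) (10 * k + 6).
Proof.
  intros Hn d. induction d as [|d IH]; intros h q Hd Hgoing Hrise Hmh;
    (destruct (classic (matched k (S h))) as [Hm|Hmis];
     [|apply settles_rise_mismatch; auto; lia]).
  - assert (Htape : tape_at w h = Dollar)
      by (replace h with (S (length w)) by lia; apply tape_at_end).
    apply (pal_stop _ _ _ _ _ _ _ _ qAcc); [exact Hgoing| |reflexivity|lia|].
    + rewrite Hrise, Htape, Hn, det_output_rise_matched by (auto; lia). reflexivity.
    + rewrite Hn, det_output_rise_matched by (auto; lia).
      replace (2 * k + 2) with (S h) by lia. exact Hm.
  - assert (Hdelta : pal_delta q (tape_at w h)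
              (det_output A0 lam (length w) (lit_beyond k 0) (2 * k + 1) (S h)) =
              (qRise, HR, DU, NoAct)).
    { rewrite Hrise, Hn, det_output_rise_matched by (auto; lia). unfold rise_delta.
      destruct (tape_at w h) eqn:Htape; try reflexivity.
      exfalso. apply (tape_at_not_end h); [lia|exact Htape]. }
    eapply pal_step;
      [exact Hgoing|exact Hdelta|discriminate
      |apply (IH (S h)); [lia|reflexivity|intros b; reflexivity|exact Hm]
      |first [reflexivity|step_arith]..].
Qed.

Lemma settles_left k :
  length w = 2 * k ->
  forall h, h < k ->
  settles_pal qLeft h (2 * k + 1) 1 (lit_beyond k h) (6 * k + 4 - h)
    (matched k (2 * k + 2)) (10 * k + 6).
Proof.
  intros Hn h. induction h as [|h IH]; intros Hh.
  - replace (6 * k + 4 - 0) with (6 * k + 4 + 2 * 0) by lia.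
    apply (settles_rise k Hn (2 * k + 1) 0);
      [lia|reflexivity|intros b; reflexivity|apply matched_ground].
  - assert (Hdelta : pal_delta qLeft (tape_at w (S h))
              (det_output A0 lam (length w) (lit_beyond k (S h)) (2 * k + 1) 1) =
              (qLeft, HL, DS, Toggle (letter_phase (cell_letter (S h))))).
    { rewrite tape_at_letter by lia. reflexivity. }
    eapply pal_step;
      [reflexivity|exact Hdelta|intros p _; apply lit_beyond_off; lia|apply IH; lia
      |reflexivity|reflexivity|reflexivity| |step_arith].
    rewrite <- (mirror_phase_left k (S h)) by lia. apply lit_beyond_toggle. lia.
Qed.

Lemma settles_right k :
  length w = 2 * k -> 1 <= k ->
  forall h, k <= h <= 2 * k ->
  settles_pal qRight h (2 * k + 1) 1 (lit_beyond k h) (6 * k + 4 - h)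
    (matched k (2 * k + 2)) (10 * k + 6).
Proof.
  intros Hn Hk h. induction h as [|h IH]; intros Hh; [lia|].
  assert (Htape : tape_at w (S h) = Let (cell_letter (S h))) by (apply tape_at_letter; lia).
  destruct (Nat.eq_dec (S h) k) as [Hmid|Hbeyond].
  - assert (Hdelta : pal_delta qRight (tape_at w (S h))
              (det_output A0 lam (length w) (lit_beyond k (S h)) (2 * k + 1) 1) =
              (qLeft, HL, DS, Toggle (letter_phase (cell_letter (S h))))).
    { rewrite Htape, Hn, Hmid, det_output_right_middle by exact Hk. reflexivity. }
    eapply pal_step;
      [reflexivity|exact Hdelta|intros p _; apply lit_beyond_off; lia
      |apply (settles_left k Hn h); lia|reflexivity|reflexivity|reflexivity| |step_arith].
    rewrite <- (mirror_phase_left k (S h)) by lia. apply lit_beyond_toggle. lia.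
  - assert (Hdelta : pal_delta qRight (tape_at w (S h))
              (det_output A0 lam (length w) (lit_beyond k (S h)) (2 * k + 1) 1) =
              (qRight, HL, DS, Toggle (flip (letter_phase (cell_letter (S h)))))).
    { rewrite Htape, Hn, det_output_right_dark by lia. reflexivity. }
    eapply pal_step;
      [reflexivity|exact Hdelta|intros p _; apply lit_beyond_off; lia|apply IH; lia
      |reflexivity|reflexivity|reflexivity| |step_arith].
    rewrite <- (mirror_phase_right k (S h)) by lia. apply lit_beyond_toggle. lia.
Qed.

Lemma settles_turn k :
  length w = 2 * k ->
  settles_pal qRight (2 * k) (2 * k + 1) 1 (lit_beyond k (2 * k)) (4 * k + 4)
    (matched k (2 * k + 2)) (10 * k + 6).
Proof.
  intros Hn. destruct (Nat.eq_dec k 0) as [->|Hk].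
  - apply (settles_rise 0 Hn 1 0); [lia|reflexivity|intros b; reflexivity|apply matched_ground].
  - replace (4 * k + 4) with (6 * k + 4 - 2 * k) by lia. apply settles_right; lia.
Qed.

Definition scan_state (i : nat) : pal_state := if Nat.even i then qEven else qOdd.

Lemma settles_scan :
  forall d i, i + d = length w ->
  settles_pal (scan_state i) (S i) (S i) 0 (fun _ => Off) (2 * S i) (Lpal w)
    (5 * length w + 6).
Proof.
  intros d. induction d as [|d IH]; intros i Hd.
  - rewrite Nat.add_0_r in Hd.
    assert (Htape : tape_at w (S i) = Dollar) by (rewrite Hd; apply tape_at_end).
    unfold scan_state. destruct (Nat.even i) eqn:Hev.
    + apply Nat.even_spec in Hev as [k Hk].
      apply settles_from_weaken with (T := 10 * k + 6); [lia|].
      apply settles_from_iff with (P := matched k (2 * k + 2));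
        [symmetry; apply Lpal_iff_matched; lia|].
      eapply pal_step;
        [reflexivity|rewrite Htape; reflexivity|discriminate|apply (settles_turn k); lia
        |step_arith|step_arith|step_arith| |step_arith].
      apply functional_extensionality. intros m. symmetry. apply lit_beyond_off. lia.
    + apply (pal_stop _ _ _ _ _ _ _ _ qRej);
        [reflexivity|rewrite Htape; reflexivity|reflexivity|lia|].
      simpl. intros Hpal. apply Lpal_even_length in Hpal. congruence.
  - assert (Hdelta : pal_delta (scan_state i) (tape_at w (S i))
              (det_output A0 lam (length w) (fun _ => Off) (S i) 0) =
              (scan_state (S i), HR, DR, NoAct)).
    { rewrite tape_at_letter by lia. unfold scan_state.
      rewrite Nat.even_succ, <- Nat.negb_even. destruct (Nat.even i); reflexivity. }
    eapply pal_step;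
      [unfold scan_state; destruct (Nat.even i); reflexivity|exact Hdelta|discriminate
      |apply IH; lia|step_arith|step_arith|reflexivity|reflexivity|step_arith].
Qed.

Lemma settles_pal_init :
  settles pal_oia A0 lam w (init_config pal_oia w) (Lpal w) (5 * length w + 6).
Proof.
  assert (Hstart : settles_pal qStart 0 0 0 (fun _ => Off) 0 (Lpal w) (5 * length w + 6)).
  { eapply pal_step;
      [reflexivity|reflexivity|discriminate|apply (settles_scan (length w) 0); lia
      |first [reflexivity|step_arith]..]. }
  exact (Hstart _ (conf_is_init pal_oia w)).
Qed.

End Palindromes.

Theorem theorem2 (lam r A0 : R) :
  algebraic r -> (0 < r)%R -> lam = (r * PI)%R -> (0 < A0)%R ->
  exists M : OIA, decides M A0 lam Lpal /\ linear_time M A0 lam.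
Proof.
  intros _ _ _ HA. exists pal_oia.
  destruct (decides_of_settles pal_oia A0 lam Lpal (fun w => 5 * length w + 6)
              (fun w => settles_pal_init A0 lam w HA)) as [Hdecides Htime].
  split; [exact Hdecides|]. exists 5, 6. exact Htime.
Qed.
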